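(* Let $A$ be a normed vector space over $\mathbb C$ and give $A^\vee$ the topology of uniform convergence on compact sets. Then on $\mathrm{Max}\,A$ the lower Vietoris topology coincides with the topology generated by the sets $\{V\in\mathrm{Max}\,A: F(V)\cap K'=\emptyset\}$ with $K'\subset A^\vee$ compact.
   Context: $\mathrm{Max}\,A$ is the set of closed subspaces of $A$; its lower Vietoris topology is generated by $\{V:V\cap U\ne\emptyset\}$, $U\subset A$ open. $A^\vee$ is the continuous dual with subbasis $\{\phi:\phi(K)\subset U\}$, $K\subset A$ compact, $U\subset\mathbb C$ open; $F(V)=\{\phi\in A^\vee:\phi|_V=0\}$. *)

From HB Require Import structures.
From mathcomp Require Import all_boot all_order all_algebra.
From mathcomp Require Import complex.
From mathcomp Require Import all_classical all_reals all_analysis.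
Set Implicit Arguments. Unset Strict Implicit. Unset Printing Implicit Defensive.
Import Order.TTheory GRing.Theory Num.Theory.
Import numFieldNormedType.Exports.
Local Open Scope classical_set_scope.
Local Open Scope ring_scope.

Definition is_topology_on (X : Type) (O : set (set X)) : Prop :=
  O setT /\
  (forall U V, O U -> O V -> O (U `&` V)) /\
  (forall (I : Type) (F : I -> set X), (forall i, O (F i)) -> O (\bigcup_i F i)).

Definition generated_topology (X : Type) (S : set (set X)) : set (set X) :=
  fun U => forall O : set (set X), is_topology_on O -> S `<=` O -> O U.

Definition compact_wrt (X : Type) (O : set (set X)) (K : set X) : Prop :=
  forall (I : Type) (F : I -> set X), (forall i, O (F i)) ->
    K `<=` \bigcup_i F i ->
    exists D : set I, finite_set D /\ K `<=` \bigcup_(i in D) F i.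

Section Dual.
Variables (R : realType) (A : normedModType R[i]).

Definition closed_subspace (V : set A) : Prop :=
  closed V /\ V 0 /\ (forall (a : R[i]) (u v : A), V u -> V v -> V (a *: u + v)).

Definition MaxA := {V : set A | closed_subspace V}.

(* continuous linear functionals A -> C; (R[i])^o is C with its
   canonical normed (modulus) topology *)
Definition is_cont_linear_functional (f : A -> (R[i])^o) : Prop :=
  (forall (a : R[i]) (u v : A), f (a *: u + v) = a * f u + f v) /\ continuous f.

Definition dual := {f : A -> (R[i])^o | is_cont_linear_functional f}.

Definition dual_subbasis : set (set dual) :=
  fun W => exists (K : set A) (U : set (R[i])^o),
    compact K /\ open U /\ W = [set phi : dual | (sval phi) @` K `<=` U].

Definition dual_open : set (set dual) := generated_topology dual_subbasis.

(* F(V) = annihilator of V *)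
Definition annihilator (V : MaxA) : set dual :=
  [set phi : dual | forall x, sval V x -> sval phi x = 0].

Definition lower_vietoris_subbasis : set (set MaxA) :=
  fun W => exists U : set A, open U /\
    W = [set V : MaxA | sval V `&` U !=set0].

Definition annihilator_subbasis : set (set MaxA) :=
  fun W => exists K' : set dual, compact_wrt dual_open K' /\
    W = [set V : MaxA | annihilator V `&` K' = set0].

End Dual.

From HB Require Import structures.
From mathcomp Require Import all_boot all_order all_algebra.
From mathcomp Require Import complex.
From mathcomp Require Import all_classical all_reals all_analysis.
From mathcomp Require Import finmap ring lra.
Import numFieldNormedType.Exports.
Set Implicit Arguments. Unset Strict Implicit. Unset Printing Implicit Defensive.
Import Order.TTheory GRing.Theory Num.Theory.
Local Open Scope classical_set_scope.
Local Open Scope ring_scope.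

(* If V meets the open set U at x and B(x, e) ⊆ U, let K be the set of
   functionals phi with phi x = 1 and |phi| <= 1/e; it is compact by
   Arzelà-Ascoli (closed, pointwise bounded, equicontinuous).  Every V' with
   F(V') ∩ K = ∅ meets U: otherwise x is at distance >= e from V', and
   Hahn-Banach yields phi ∈ F(V') ∩ K.  Conversely, a compact K' of the dual is
   uniformly bounded by some c (a null sequence x_n with |phi_n x_n| -> oo
   would contradict compactness of {0} ∪ {x_n}).  If F(V) ∩ K' = ∅, every
   phi ∈ K' equals 1 at some x_phi ∈ V; finitely many of the open sets
   {psi : |psi x_phi| > 1/2} cover K', and any V' meeting each ball
   B(x_phi, 1/(2c)) still has F(V') ∩ K' = ∅. *)

Section GeneratedTopology.
Variable X : Type.
Implicit Types (S : set (set X)) (W : set X).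

Lemma generated_topologyP S : is_topology_on (generated_topology S).
Proof.
split; [|split].
- by move=> O [].
- by move=> U V gU gV O tO SO; case: (tO) => _ [+ _]; apply; [apply: gU|apply: gV].
- by move=> I F gF O tO SO; case: (tO) => _ [_]; apply => i; apply: gF.
Qed.

Lemma generated_topology_subbasis S : S `<=` generated_topology S.
Proof. by move=> W SW O _; apply. Qed.

Lemma generated_topology_min S1 S2 : S1 `<=` generated_topology S2 ->
  generated_topology S1 `<=` generated_topology S2.
Proof. by move=> h W gW; apply: gW; [exact: generated_topologyP|]. Qed.

Lemma generated_topology_bigcap S (I : Type) (D : set I) (f : I -> set X) :
  finite_set D -> (forall i, D i -> generated_topology S (f i)) ->
  generated_topology S (\bigcap_(i in D) f i).
Proof.
have [gT [gI _]] := generated_topologyP S.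
move=> /(@finite_fsetP {classic I}) [F ->] gf.
rewrite (@bigcap_fset {classic I}) big_seq.
by elim/big_rec: _ => // i U iF gU; apply: gI => //; apply: gf.
Qed.

Lemma generated_topology_local S W :
  (forall w, W w -> exists N, [/\ generated_topology S N, N w & N `<=` W]) ->
  generated_topology S W.
Proof.
move=> h; have /(_ _)/cid hN : forall p : {w | W w},
    exists N, [/\ generated_topology S N, N (sval p) & N `<=` W].
  by move=> [w Ww]; exact: h.
have -> : W = \bigcup_p sval (hN p).
  apply/seteqP; split => [w Ww|w [p _ Nw]]; last by case: (svalP (hN p)) => _ _; apply.
  by exists (exist _ w Ww) => //; case: (svalP (hN (exist _ w Ww))).
have [_ [_ gU]] := generated_topologyP S.
by apply: gU => p; case: (svalP (hN p)).
Qed.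

End GeneratedTopology.

Section RealHahnBanach.
Variables (R : realType) (A : lmodType R[i]) (p : A -> R).
Local Notation rc := (real_complex R).
Hypothesis pD : forall a b, p (a + b) <= p a + p b.
Hypothesis pZ : forall (t : R) a, 0 < t -> p (rc t *: a) = t * p a.
Implicit Types (G M : set (A * R)) (a b : A) (r s t : R).

Definition real_linear (g : A -> R) := forall t a b, g (rc t *: a + b) = t * g a + g b.

Definition functional_graph G := forall a r s, G (a, r) -> G (a, s) -> r = s.

Definition linear_graph G :=
  forall t a b r s, G (a, r) -> G (b, s) -> G (rc t *: a + b, t * r + s).

Definition dominated_graph G := forall a r, G (a, r) -> r <= p a.

Definition hahn_banach_graph G :=
  [/\ functional_graph G, linear_graph G & dominated_graph G].

Lemma linear_graph0 G a r : linear_graph G -> G (a, r) -> G (0, 0).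
Proof.
by move=> lG Gar; have := lG (-1) _ _ _ _ Gar Gar; rewrite rmorphN1 scaleN1r mulN1r !addNr.
Qed.

Lemma linear_graphZ G t a r : linear_graph G -> G (a, r) -> G (rc t *: a, t * r).
Proof. by move=> lG Gar; have := lG t _ _ _ _ Gar (linear_graph0 lG Gar); rewrite !addr0. Qed.

Lemma hahn_banach_graph_bigcup (F : set (set (A * R))) :
  F `<=` hahn_banach_graph -> total_on F subset ->
  hahn_banach_graph (\bigcup_(X in F) X).
Proof.
move=> Fhb Ftot.
have common q1 q2 : (\bigcup_(X in F) X) q1 -> (\bigcup_(X in F) X) q2 ->
    exists2 X, F X & X q1 /\ X q2.
  move=> [X1 F1 Xq1] [X2 F2 Xq2].
  have [X12|X21] := Ftot _ _ F1 F2; first by exists X2 => //; split => //; exact: X12.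
  by exists X1 => //; split => //; exact: X21.
split.
- move=> a r s Gr Gs; have [X /Fhb[fX _ _] [Xr Xs]] := common _ _ Gr Gs.
  exact: fX Xr Xs.
- move=> t a b r s Gr Gs; have [X FX [Xr Xs]] := common _ _ Gr Gs.
  by exists X => //; have [_ lX _] := Fhb _ FX; exact: lX.
- by move=> a r [X /Fhb[_ _ dX] Xr]; exact: dX.
Qed.

Section Extension.
Variables (M : set (A * R)) (a : A).
Hypotheses (hbM : hahn_banach_graph M) (M0 : M !=set0).

Lemma extension_constant : exists c, (forall b r, M (b, r) -> r - p (b - a) <= c) /\
  (forall b r, M (b, r) -> c <= p (b + a) - r).
Proof.
have [_ lM dM] := hbM; have [[b0 r0] Mbr0] := M0.
pose E := [set y | exists b r, M (b, r) /\ y = r - p (b - a)].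
have sep b r b' r' : M (b, r) -> M (b', r') -> r - p (b - a) <= p (b' + a) - r'.
  move=> Mbr Mbr'; have := dM _ _ (lM 1 _ _ _ _ Mbr Mbr').
  rewrite rmorph1 scale1r mul1r.
  have := pD (b - a) (b' + a); rewrite addrACA addNr addr0; lra.
have E0 : E !=set0 by exists (r0 - p (b0 - a)), b0, r0.
have ubE : ubound E (p (b0 + a) - r0) by move=> y [b [r [Mbr ->]]]; exact: sep.
exists (sup E); split => [b r Mbr|b r Mbr].
  by apply: ub_le_sup; [exists (p (b0 + a) - r0) | exists b, r].
by apply: ge_sup E0 _ => y [b' [r' [Mbr' ->]]]; exact: sep.
Qed.

Lemma extension_dominated c b r t :
  (forall b r, M (b, r) -> r - p (b - a) <= c) ->
  (forall b r, M (b, r) -> c <= p (b + a) - r) ->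
  M (b, r) -> r + t * c <= p (b + rc t *: a).
Proof.
have [_ lM dM] := hbM; move=> c_ge c_le Mbr.
have [t0|t0|->] := ltgtP t 0; last by rewrite mul0r rmorph0 scale0r !addr0; exact: dM.
- have s0 : 0 < - t by rewrite oppr_gt0.
  have := c_ge _ _ (linear_graphZ (- t)^-1 lM Mbr).
  have -> : b + rc t *: a = rc (- t) *: (rc (- t)^-1 *: b - a).
    by rewrite scalerBr scalerA -rmorphM mulfV ?gt_eqF // scale1r rmorphN scaleNr opprK.
  rewrite pZ // => h; have := ler_wpM2l (ltW s0) h.
  by rewrite mulrBr mulrA mulfV ?gt_eqF // mul1r; lra.
- have := c_le _ _ (linear_graphZ t^-1 lM Mbr).
  have -> : b + rc t *: a = rc t *: (rc t^-1 *: b + a).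
    by rewrite scalerDr scalerA -rmorphM mulfV ?gt_eqF // scale1r.
  rewrite pZ // => h; have := ler_wpM2l (ltW t0) h.
  by rewrite mulrBr mulrA mulfV ?gt_eqF // mul1r; lra.
Qed.

Lemma hahn_banach_graph_extend : (forall r, ~ M (a, r)) ->
  exists2 M', hahn_banach_graph M' & M `<` M'.
Proof.
move=> Mna; have [fM lM dM] := hbM; have [c [c_ge c_le]] := extension_constant.
have M00 : M (0, 0) by have [[b0 r0]] := M0; exact: linear_graph0.
pose M' := [set q | exists b r t, M (b, r) /\ q = (b + rc t *: a, r + t * c)].
have MM' : M `<=` M'.
  by move=> [b r] Mbr; exists b, r, 0; rewrite mul0r rmorph0 scale0r !addr0.
exists M'; last first.
  split => // /(_ (a, c)) M'M; apply: (Mna c); apply: M'M.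
  by exists 0, 0, 1; split => //; rewrite rmorph1 scale1r mul1r !add0r.
split.
- move=> _ _ _ [b1 [r1 [t1 [Mbr1 [-> ->]]]]] [b2 [r2 [t2 [Mbr2 [e ->]]]]].
  have [t12|t12] := eqVneq t1 t2.
    by move: e; rewrite t12 => /addIr eb; rewrite eb in Mbr1; rewrite (fM _ _ _ Mbr1 Mbr2).
  exfalso; apply: (Mna ((t1 - t2)^-1 * (r2 - r1))).
  have Mb : M (b2 - b1, r2 - r1).
    by have := lM (-1) _ _ _ _ Mbr1 Mbr2; rewrite rmorphN1 scaleN1r mulN1r !(addrC (- _)).
  have ab : b2 - b1 = rc (t1 - t2) *: a.
    have -> : b2 = b1 + rc t1 *: a - rc t2 *: a by rewrite e addrK.
    by rewrite rmorphB scalerBl addrAC [b1 + _]addrC addrK.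
  have := linear_graphZ (t1 - t2)^-1 lM Mb.
  by rewrite ab scalerA -rmorphM mulVf ?subr_eq0 // scale1r.
- move=> t _ _ _ _ [b1 [r1 [t1 [Mbr1 [-> ->]]]]] [b2 [r2 [t2 [Mbr2 [-> ->]]]]].
  exists (rc t *: b1 + b2), (t * r1 + r2), (t * t1 + t2); split; first exact: lM.
  congr (_, _); last by ring.
  by rewrite scalerDr scalerA -rmorphM addrACA -scalerDl -rmorphD.
- by move=> _ _ [b [r [t [Mbr [-> ->]]]]]; exact: extension_dominated.
Qed.

End Extension.

Theorem real_hahn_banach G0 : hahn_banach_graph G0 -> G0 !=set0 ->
  exists g : A -> R,
    [/\ real_linear g, forall a, g a <= p a & forall a r, G0 (a, r) -> g a = r].
Proof.
move=> hbG0 [q0 G0q0].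
(* The guard [M !=set0] lets the union of the empty chain qualify. *)
pose P M := hahn_banach_graph M /\ (M !=set0 -> G0 `<=` M).
have [M [[hbM G0M] maxM]] : exists M, P M /\ forall B, M `<` B -> ~ P B.
  apply: Zorn_bigcup => F FP Ftot; split.
    by apply: hahn_banach_graph_bigcup => // X /FP[].
  by move=> [q [X FX Xq]]; apply: subset_trans (bigcup_sup FX); apply: (FP X FX).2; exists q.
have M0 : M !=set0.
  apply/set0P/negP => /eqP M_eq0; apply: (maxM G0); last by split => // _.
  by rewrite M_eq0; split => // /(_ _ G0q0).
have {}G0M := G0M M0.
have /(_ _)/cid total a : exists r, M (a, r).
  apply: contrapT => Mna.
  have [M' hbM' MM'] := hahn_banach_graph_extend hbM M0 (fun r Mar => Mna (ex_intro _ r Mar)).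
  by apply: (maxM M' MM'); split => // _; apply: subset_trans G0M MM'.1.
have [fM lM dM] := hbM.
pose g a := sval (total a); have Mg a : M (a, g a) := svalP (total a).
exists g; split.
- by move=> t a b; apply: fM (Mg _) (lM _ _ _ _ _ (Mg a) (Mg b)).
- by move=> a; exact: dM (Mg a).
- by move=> a r G0ar; apply: fM (Mg a) (G0M _ G0ar).
Qed.

End RealHahnBanach.

Section Complexification.
Variables (R : realType) (A : lmodType R[i]).
Local Notation rc := (real_complex R).
Implicit Types (u v : A) (t : R) (k : R[i]).

Definition complex_linear (f : A -> R[i]) := forall k u v, f (k *: u + v) = k * f u + f v.

Definition complexify (g : A -> R) u : R[i] := rc (g u) - 'i%C * rc (g ('i%C *: u)).

Lemma Re_complexify g u : complex.Re (complexify g u) = g u.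
Proof. by rewrite /= !mul0r !mul1r subrr subr0. Qed.

Lemma complex_linear0 f : complex_linear f -> f 0 = 0.
Proof. by move=> lf; have := lf (-1) 0 0; rewrite scaler0 addr0 mulN1r addNr. Qed.

Lemma complex_linearZ f k u : complex_linear f -> f (k *: u) = k * f u.
Proof. by move=> lf; have := lf k u 0; rewrite !addr0 complex_linear0 ?addr0. Qed.

Lemma complex_linearB f u v : complex_linear f -> f (u - v) = f u - f v.
Proof. by move=> lf; rewrite addrC -scaleN1r lf mulN1r addrC. Qed.

Section RealLinear.
Variables (g : A -> R) (lg : real_linear g).

Lemma real_linearD u v : g (u + v) = g u + g v.
Proof. by have := lg 1 u v; rewrite rmorph1 scale1r mul1r. Qed.

Lemma real_linearZ t u : g (rc t *: u) = t * g u.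
Proof.
have g0 : g 0 = 0 by have := lg (-1) 0 0; rewrite scaler0 addr0 mulN1r addNr.
by have := lg t u 0; rewrite !addr0 g0 addr0.
Qed.

Lemma complexify_linear : complex_linear (complexify g).
Proof.
have cD u v : complexify g (u + v) = complexify g u + complexify g v.
  by rewrite /complexify scalerDr !real_linearD !rmorphD; ring.
have cZ t u : complexify g (rc t *: u) = rc t * complexify g u.
  by rewrite /complexify scalerA [_ * rc t]mulrC -scalerA !real_linearZ !rmorphM; ring.
have ci u : complexify g ('i%C *: u) = 'i%C * complexify g u.
  have iiu : 'i%C *: ('i%C *: u) = rc (-1) *: u by rewrite scalerA -expr2 sqr_i rmorphN1.
  by rewrite /complexify iiu real_linearZ mulN1r rmorphN mulrBr mulrA -expr2 sqr_i; ring.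
move=> k u v; rewrite cD; congr (_ + _).
rewrite [k]complexE scalerDl -scalerA cD cZ ci cZ; ring.
Qed.

End RealLinear.
End Complexification.

Section SeparatingFunctional.
Variables (R : realType) (A : normedModType R[i]).
Local Notation rc := (real_complex R).
Implicit Types (a b : A) (t : R) (c k : R[i]).

Lemma real_ge0_Re k : 0 <= k -> rc (complex.Re k) = k.
Proof. by move=> /ger0_real /RRe_real. Qed.

Lemma ReD k k' : complex.Re (k + k') = complex.Re k + complex.Re k'.
Proof. by case: k; case: k'. Qed.

Lemma Re_le k k' : k <= k' -> complex.Re k <= complex.Re k'.
Proof. by rewrite lecE => /andP[]. Qed.

Definition scaled_norm c a : R := complex.Re (c * `|a|).

Lemma scaled_normD c a b : 0 <= c ->
  scaled_norm c (a + b) <= scaled_norm c a + scaled_norm c b.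
Proof.
by move=> c0; rewrite /scaled_norm -ReD; apply: Re_le; rewrite -mulrDr ler_wpM2l // ler_normD.
Qed.

Lemma scaled_normZ c t a : 0 < t -> scaled_norm c (rc t *: a) = t * scaled_norm c a.
Proof.
move=> t0; rewrite /scaled_norm normrZ gtr0_norm ?ltcR // mulrCA.
by case: (c * `|a|) => ? ? /=; rewrite mul0r subr0.
Qed.

Lemma complexify_norm (g : A -> R) c : real_linear g -> 0 <= c ->
  (forall a, g a <= scaled_norm c a) -> forall a, `|complexify g a| <= c * `|a|.
Proof.
move=> lg c0 gc a; set z := complexify g a.
have [->|z0] := eqVneq z 0; first by rewrite normr0 mulr_ge0.
pose u := `|z| / z.
have gua : rc (g (u *: a)) = `|z|.
  by rewrite -Re_complexify (complex_linearZ _ _ (complexify_linear lg)) divfK.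
have normu : `|u| = 1 by rewrite normrM normfV normr_id mulfV // normr_eq0.
rewrite -gua -(real_ge0_Re (mulr_ge0 c0 (normr_ge0 a))) lecR.
by apply: le_trans (gc _) _; rewrite /scaled_norm normrZ normu mul1r.
Qed.

Section Separation.
Variables (V : set A) (x : A) (e : R[i]).
Hypotheses (e0 : 0 < e) (V0 : V 0) (VZD : forall k a b, V a -> V b -> V (k *: a + b)).
Hypothesis x_far : forall v, V v -> e <= `|x - v|.

Definition span_graph : set (A * R) :=
  [set q | exists v k, V v /\ q = (v + k *: x, complex.Re k)].

Lemma span_graph_hahn_banach : hahn_banach_graph (scaled_norm e^-1) span_graph.
Proof.
have VZ k a : V a -> V (k *: a) by move=> Va; rewrite -[_ *: _]addr0; exact: VZD.
split.
- move=> _ r s [v1 [k1 [V1 [-> ->]]]] [v2 [k2 [V2 [e12 ->]]]].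
  have [->//|k12] := eqVneq k1 k2; exfalso.
  have Vx : V x.
    have dv : v2 - v1 = (k1 - k2) *: x.
      have -> : v2 = v1 + k1 *: x - k2 *: x by rewrite e12 addrK.
      by rewrite scalerBl addrAC [v1 + _]addrC addrK.
    have -> : x = (k1 - k2)^-1 *: (v2 - v1) by rewrite dv scalerA mulVf ?subr_eq0 ?scale1r.
    by apply: VZ; rewrite addrC -scaleN1r; exact: VZD.
  by have := x_far Vx; rewrite subrr normr0 => /(lt_le_trans e0); rewrite ltxx.
- move=> t _ _ _ _ [v1 [k1 [V1 [-> ->]]]] [v2 [k2 [V2 [-> ->]]]].
  exists (rc t *: v1 + v2), (rc t * k1 + k2); split; first exact: VZD.
  congr (_, _); first by rewrite scalerDr scalerA scalerDl addrACA.
  by case: k1 k2 => ? ? [? ?] /=; rewrite mul0r subr0.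
- move=> _ _ [v [k [Vv [-> ->]]]].
  have ge0 : 0 <= e^-1 * `|v + k *: x| by rewrite mulr_ge0 ?invr_ge0 ?normr_ge0 ?(ltW e0).
  apply: le_trans (ler_norm _) _; rewrite -lecR real_ge0_Re //.
  apply: le_trans (normc_ge_Re k) _; rewrite -(ler_pM2l e0) mulrA mulfV ?gt_eqF // mul1r.
  have [->|k0] := eqVneq k 0; first by rewrite normr0 mulr0 normr_ge0.
  have -> : v + k *: x = k *: (x - (- k^-1) *: v).
    by rewrite scalerBr scalerA mulrN mulfV // scaleN1r opprK addrC.
  by rewrite normrZ mulrC ler_pM2l ?normr_gt0 //; apply: x_far; exact: VZ.
Qed.

Theorem separating_functional : exists f : A -> R[i], [/\ complex_linear f, f x = 1,
  forall a, `|f a| <= e^-1 * `|a| & forall v, V v -> f v = 0].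
Proof.
have ie0 : 0 <= e^-1 by rewrite invr_ge0 ltW.
have G0 : span_graph (0, 0) by exists 0, 0; rewrite scale0r addr0.
have [g [lg gp gG]] := real_hahn_banach (fun a b => scaled_normD a b ie0)
  (@scaled_normZ e^-1) span_graph_hahn_banach (ex_intro _ _ G0).
have gspan v k : V v -> g (v + k *: x) = complex.Re k by move=> Vv; apply: gG; exists v, k.
have gV v : V v -> g v = 0 by move=> Vv; have := gspan v 0 Vv; rewrite scale0r addr0.
exists (complexify g); split.
- exact: complexify_linear.
- have gx : g x = 1 by have := gspan 0 1 V0; rewrite scale1r add0r.
  have gix : g ('i%C *: x) = 0 by have := gspan 0 'i%C V0; rewrite add0r.
  by rewrite /complexify gx gix mulr0 subr0.
- exact: complexify_norm lg ie0 gp.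
- move=> v Vv; rewrite /complexify gV // gV ?mulr0 ?subr0 //.
  by rewrite -[_ *: v]addr0; exact: VZD.
Qed.

End Separation.
End SeparatingFunctional.

Lemma open_norm_gt (K : numFieldType) (V : normedModType K) (r : K) :
  open [set z : V | r < `|z|].
Proof.
rewrite openE => z /= rz; apply/nbhs_ballP; exists (`|z| - r); first by rewrite /= subr_gt0.
move=> w; rewrite -ball_normE /ball_ /= ltrBrDl => lt.
have := ler_normD (z - w) w; rewrite subrK => h.
by rewrite -(ltrD2l `|z - w|) addrC; exact: lt_le_trans lt h.
Qed.

Lemma compact_cvg_range (T : ptopologicalType) (x : nat -> T) (l : T) :
  x @ \oo --> l -> compact (l |` range x).
Proof.
move=> xl; rewrite compact_cover => I D f fop cov.
have [i0 Di0 fi0l] := cov l (or_introl erefl).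
have [N _ xN] : \forall n \near \oo, f i0 (x n).
  by apply: xl; apply: open_nbhs_nbhs; split => //; exact: fop.
have [D1 D1D hcov] : finite_subset_cover D f [set x k | k in `I_N].
  have := finite_compact (finite_image x (finite_II N)); rewrite compact_cover; apply => //.
  by move=> _ [k _ <-]; apply: cov; right; exists k.
exists (i0 |` D1)%fset.
  by move=> i; rewrite !inE => /orP[/eqP->|/D1D//]; exact/mem_set.
move=> _ [->|[k _ <-]]; first by exists i0 => //=; rewrite !inE eqxx.
have [kN|Nk] := ltnP k N; last by exists i0 => //=; [rewrite !inE eqxx | exact: xN].
have [i D1i fik] := hcov (x k) (ex_intro2 _ _ k kN erefl).
by exists i => //=; rewrite !inE D1i orbT.
Qed.

Section ComplexNumbers.
Variable R : realType.

Lemma normc_lt_nat (z : R[i]) : exists m : nat, `|z| < m%:R.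
Proof.
rewrite normc_def; set r := Num.sqrt _.
exists (Num.bound r); rewrite -(rmorph_nat (real_complex R)) ltcR.
by apply: archi_boundP; rewrite sqrtr_ge0.
Qed.

Lemma cvg0_harmonic_bound (V : normedModType R[i]) (x : nat -> V) :
  (forall n, `|x n| <= n.+1%:R^-1) -> x @ \oo --> 0.
Proof.
move=> hx; apply/cvgrPdist_lt => e e0; have [m hm] := normc_lt_nat e^-1.
exists m => // n /= mn; rewrite sub0r normrN; apply: le_lt_trans (hx n) _.
rewrite -[e]invrK ltf_pV2 ?posrE ?invr_gt0 ?ltr0n //.
move: hm; rewrite gtr0_norm ?invr_gt0 // => /lt_le_trans; apply.
by rewrite ler_nat; exact: leqW.
Qed.

Lemma continuous_Complex : continuous (fun p : R * R => (Complex p.1 p.2 : (R[i])^o)).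
Proof.
move=> p; apply/cvgrPdist_lt => e e0.
have : (0 : R[i]) < e := e0.
rewrite ltcE /= => /andP [/eqP Ie e0'].
have eE : e = (complex.Re e)%:C%C by case: e Ie {e0 e0'} => a b /= ->.
apply/(@nbhs_ballP R (R * R)%type); exists (complex.Re e / 2); first by rewrite /= divr_gt0.
case=> q1 q2 [/= b1 b2]; move: b1 b2; rewrite -!ball_normE /ball_ /= => b1 b2.
rewrite normc_def /= eE ltcR.
set a := p.1 - q1 in b1 *; set b := p.2 - q2 in b2 *.
have h : a ^+ 2 + b ^+ 2 <= (`|a| + `|b|) ^+ 2.
  rewrite -[a ^+ 2]real_normK ?num_real // -[b ^+ 2]real_normK ?num_real //.
  have := normr_ge0 a; have := normr_ge0 b; nra.
rewrite -(@ltr_pXn2r _ 2) // ?sqrtr_ge0 ?sqr_sqrtr ?addr_ge0 ?sqr_ge0 ?nnegrE ?sqrtr_ge0 ?(ltW e0') //.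
apply: (le_lt_trans h); rewrite ltr_pXn2r ?nnegrE ?addr_ge0 ?normr_ge0 ?(ltW e0') //.
have := normr_ge0 a; have := normr_ge0 b; lra.
Qed.

Lemma compact_disc (s : R) : exists2 B : set (R[i])^o, compact B &
  forall z : (R[i])^o, `|z| <= s%:C%C -> B z.
Proof.
exists ((fun p : R * R => (Complex p.1 p.2 : (R[i])^o)) @` (`[-s, s] `*` `[-s, s])).
  apply: continuous_compact; first exact: continuous_subspaceT continuous_Complex.
  by apply: compact_setX; exact: segment_compact.
case=> a b; rewrite normc_def lecR /= => h.
have ha : `|a| <= s.
  by apply: le_trans h; rewrite -sqrtr_sqr; apply: ler_wsqrtr; rewrite lerDl sqr_ge0.
have hb : `|b| <= s.
  by apply: le_trans h; rewrite -sqrtr_sqr; apply: ler_wsqrtr; rewrite lerDr sqr_ge0.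
by exists (a, b) => //; split; rewrite /= in_itv /= -ler_norml.
Qed.

End ComplexNumbers.

Section Dual.
Variables (R : realType) (A : normedModType R[i]).
Implicit Types (f : A -> (R[i])^o) (c : R[i]).

Lemma bounded_linear_continuous f c : complex_linear f -> 0 < c ->
  (forall a, `|f a| <= c * `|a|) -> continuous f.
Proof.
move=> lf c0 fc a; apply/cvgrPdist_lt => e e0.
apply/nbhs_ballP; exists (e / c); first by rewrite /= divr_gt0.
move=> b; rewrite -ball_normE /ball_ /= => abe.
rewrite -complex_linearB //; apply: le_lt_trans (fc _) _.
by rewrite -(ltr_pM2l c0) mulrCA mulfV ?gt_eqF // mulr1 in abe.
Qed.

Lemma continuous_linear_bounded f : is_cont_linear_functional f ->
  exists2 c, 0 < c & forall a, `|f a| <= c * `|a|.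
Proof.
move=> [lf cf]; have f0 := complex_linear0 lf.
have : f a @[a --> (0 : A)] --> (0 : (R[i])^o) by rewrite -f0; exact: cf.
move=> /cvgrPdist_lt /(_ 1 ltr01) /nbhs_ballP [d /= d0 hd].
exists (2 / d) => [|a]; first by rewrite divr_gt0.
have [->|a0] := eqVneq a 0; first by rewrite f0 !normr0 mulr0.
have na0 : 0 < `|a| by rewrite normr_gt0.
pose k := d / (2 * `|a|); have k0 : 0 < k by rewrite divr_gt0 // mulr_gt0.
have : ball (0 : A) d (k *: a).
  rewrite -ball_normE /ball_ /= sub0r normrN normrZ gtr0_norm // /k.
  have -> : d / (2 * `|a|) * `|a| = d / 2 by field; rewrite gt_eqF.
  by rewrite ltr_pdivrMr // ltr_pMr // ltr1n.
move=> /hd /=; rewrite sub0r normrN complex_linearZ // normrM gtr0_norm // => fka.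
have -> : 2 / d * `|a| = k^-1 by rewrite /k; field; rewrite !gt_eqF.
by apply: ltW; rewrite -(ltr_pM2l k0) mulfV ?gt_eqF.
Qed.

Lemma unbounded_dual_sequence (K' : set (dual A)) :
  ~ (exists2 c, 0 < c & forall phi, K' phi -> forall a, `|sval phi a| <= c * `|a|) ->
  exists (phi : nat -> dual A) (x : nat -> A), [/\ forall n, K' (phi n),
    forall n, `|x n| <= n.+1%:R^-1 & forall n, n.+1%:R < `|sval (phi n) (x n)|].
Proof.
move=> unb.
(* The factor [(n+1)^2] leaves room to rescale to norm [1/(n+1)]. *)
have /(_ _)/cid big n : exists pa : dual A * A,
    K' pa.1 /\ (n.+1 ^ 2)%:R * `|pa.2| < `|sval pa.1 pa.2|.
  apply: contrapT => nbig; apply: unb; exists (n.+1 ^ 2)%:R; first by rewrite ltr0n expn_gt0.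
  move=> phi Kphi a; rewrite real_leNgt ?realE ?normr_ge0 ?mulr_ge0 ?ler0n //.
  by apply/negP => lt; apply: nbig; exists (phi, a).
pose phi n := (sval (big n)).1; pose a n := (sval (big n)).2.
have [Kphi phia] : (forall n, K' (phi n)) /\
    forall n, (n.+1 ^ 2)%:R * `|a n| < `|sval (phi n) (a n)|.
  by split => n; case: (svalP (big n)).
have lphi n := (svalP (phi n)).1.
have a0 n : 0 < `|a n|.
  rewrite normr_gt0; apply/eqP => an0; have := phia n.
  by rewrite an0 normr0 mulr0 complex_linear0 // normr0 ltxx.
pose x n := (n.+1%:R * `|a n|)^-1 *: a n.
have k0 n : 0 < (n.+1%:R * `|a n|)^-1 :> R[i] by rewrite invr_gt0 mulr_gt0 ?ltr0n.
exists phi, x; split => // n.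
  by rewrite /x normrZ gtr0_norm // invfM -mulrA mulVf ?gt_eqF // mulr1.
rewrite /x complex_linearZ // normrM gtr0_norm //.
have := phia n; rewrite -(ltr_pM2l (k0 n)); apply: le_lt_trans.
by rewrite natrX le_eqVlt; apply/orP; left; apply/eqP; field; rewrite !gt_eqF ?ltr0n.
Qed.

Lemma compact_dual_equibounded (K' : set (dual A)) : compact_wrt (@dual_open R A) K' ->
  exists2 c, 0 < c & forall phi, K' phi -> forall a, `|sval phi a| <= c * `|a|.
Proof.
move=> cK'; apply: contrapT => /unbounded_dual_sequence [phi [x [Kphi xn phix]]].
set X := 0 |` range x.
have cX : compact X by apply: compact_cvg_range; exact: cvg0_harmonic_bound.
pose G m := [set psi : dual A | sval psi @` X `<=` ball (0 : (R[i])^o) m%:R].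
have oG m : dual_open (G m).
  apply: generated_topology_subbasis; exists X, (ball 0 m%:R).
  by split => //; split => //; exact: ball_open.
have cov : K' `<=` \bigcup_m G m.
  move=> psi _; have [L L0 hL] := continuous_linear_bounded (svalP psi).
  have [m hm] := normc_lt_nat L; exists m => // _ [y Xy <-].
  rewrite -ball_normE /ball_ /= sub0r normrN; apply: le_lt_trans (hL y) (le_lt_trans _ hm).
  rewrite gtr0_norm // ler_piMr ?(ltW L0) //.
  case: Xy => [->|[n _ <-]]; first by rewrite normr0.
  by apply: le_trans (xn n) _; rewrite invf_le1 ?ler1n ?ltr0n.
have [D [fD covD]] := cK' _ G oG cov.
have [M DM] : exists M, forall m, D m -> (m <= M)%N.
  move/finite_fsetP: fD => [F ->]; exists (\max_(i <- F) i)%N => m Fm.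
  exact: leq_bigmax_seq.
have [m Dm Gm] := covD _ (Kphi M).
have : `|sval (phi M) (x M)| < m%:R.
  have : ball (0 : (R[i])^o) m%:R (sval (phi M) (x M)).
    by apply: Gm; exists (x M) => //; right; exists M.
  by rewrite -ball_normE /ball_ /= sub0r normrN.
move/(lt_trans (phix M)); rewrite ltr_nat => /leq_trans/(_ (DM _ Dm)).
by rewrite ltnNge leqnSn.
Qed.

End Dual.

Section DualSlice.
Variables (R : realType) (A : normedModType R[i]).
Local Notation cfun := {family compact, A -> (R[i])^o}.

Definition bounded_slice (x : A) (c : R[i]) : set cfun :=
  [set f | [/\ complex_linear f, f x = 1 & forall a, `|f a| <= c * `|a|]].

Lemma closed_bounded_slice x c : 0 < c -> closed (bounded_slice x c).
Proof.
move=> c0 p; rewrite closureEcvg => -[G PG [Gp WG]].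
have GW : G (bounded_slice x c) by apply: WG.
have pt t : (fun g : A -> (R[i])^o => g t) @ G --> p t.
  by move/pointwise_cvgP : (pointwise_cvg_compact_family PG Gp) => /(_ t).
have cl1 (y : (R[i])^o) : closed [set y].
  by apply: compact_closed; [exact: norm_hausdorff | exact: compact_set1].
split.
- move=> k u v; apply/eqP; rewrite -subr_eq0; apply/eqP.
  apply: (@closed_cvg _ _ G PG (fun g : A -> (R[i])^o => g (k *: u + v) - (k * g u + g v)) _ (cl1 0)).
    by apply: filterS GW => g [lg _ _]; rewrite /= lg subrr.
  by apply: cvgB; [exact: pt | apply: cvgD; [apply: cvgM; [exact: cvg_cst|]|]; exact: pt].
- apply: (@closed_cvg _ _ G PG (fun g : A -> (R[i])^o => g x) _ (cl1 1)); last exact: pt.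
  by apply: filterS GW => g [].
- move=> a; rewrite real_leNgt ?realE ?normr_ge0 ?mulr_ge0 ?(ltW c0) //; apply/negP.
  have cl : closed (~` [set z : (R[i])^o | c * `|a| < `|z|]).
    by apply: open_closedC; exact: open_norm_gt.
  apply: (@closed_cvg _ _ G PG (fun g : A -> (R[i])^o => g a) _ cl); last exact: pt.
  by apply: filterS GW => g [_ _ hg] /= lt; have := lt_le_trans lt (hg a); rewrite ltxx.
Qed.

Lemma compact_bounded_slice x c : 0 < c -> compact (bounded_slice x c).
Proof.
move=> c0; rewrite ((closure_id (bounded_slice x c)).1 (@closed_bounded_slice x c c0)).
rewrite -precompactE.
apply: (@pointwise_precompact_equicontinuous A (R[i])^o (@norm_hausdorff _ (R[i])^o)).
- move=> t; have [B cB hB] := compact_disc (complex.Re (c * `|t|)).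
  apply: (@precompact_subset _ _ B).
    move=> _ [f [_ _ hf] <-]; apply: hB.
    by rewrite RRe_real ?ger0_real ?mulr_ge0 ?normr_ge0 ?(ltW c0).
  rewrite precompactE -((closure_id B).1 _) //.
  exact: compact_closed (@norm_hausdorff _ (R[i])^o) cB.
- move=> a E; rewrite -entourage_ballE => -[e /= e0 hE].
  apply/(@nbhs_ballP (R[i]) A); exists (e / c); first by rewrite /= divr_gt0.
  move=> b ab f [lf _ hf]; apply: hE => /=.
  rewrite -ball_normE /ball_ /= -complex_linearB //; apply: le_lt_trans (hf _) _.
  by move: ab; rewrite -ball_normE /ball_ /= -(ltr_pM2l c0) mulrCA mulfV ?gt_eqF // mulr1.
Qed.

Lemma dual_open_trace (W : set (dual A)) : dual_open W ->
  exists G : set cfun, open G /\ forall phi, W phi <-> G (sval phi).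
Proof.
move=> oW.
pose P (W : set (dual A)) := exists G : set cfun, open G /\ forall phi, W phi <-> G (sval phi).
apply: (oW P).
  split; [|split].
  - by exists setT; split; [exact: openT |].
  - move=> U V [GU [oGU UG]] [GV [oGV VG]]; exists (GU `&` GV); split; first exact: openI.
    by move=> phi; split => -[? ?]; split; by [apply/UG | apply/VG].
  - move=> I F /(_ _)/cid hF; exists (\bigcup_i sval (hF i)); split.
      by apply: bigcup_open => i _; case: (svalP (hF i)).
    by move=> phi; split => -[i _ ?]; exists i => //; apply/(svalP (hF i)).2.
move=> _ [K [U [cK [oU ->]]]]; exists (interior [set g : cfun | g @` K `<=` U]).
split; first exact: open_interior.
move=> phi; split => [KU|/interior_subset//].
have := @fam_compact_nbhs A (R[i])^o K U (sval phi) oU KU cK (svalP phi).2.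
by apply: filterS => g hg _ [y Ky <-]; exact: hg.
Qed.

(* [compact_cover] is only stated for pointed spaces. *)
HB.instance Definition _ := isPointed.Build cfun (fun _ => 0).

Definition dual_slice (x : A) (c : R[i]) : set (dual A) :=
  [set phi | sval phi x = 1 /\ forall a, `|sval phi a| <= c * `|a|].

Lemma compact_dual_slice x c : 0 < c -> compact_wrt (@dual_open R A) (dual_slice x c).
Proof.
move=> c0 I F oF cov.
have /(_ _)/cid hG i := dual_open_trace (oF i); pose G i := sval (hG i).
have covG : bounded_slice x c `<=` \bigcup_(i in [set: {classic I}]) G i.
  move=> f [lf fx fc].
  have cf : is_cont_linear_functional f by split => //; exact: bounded_linear_continuous c0 fc.
  have [i _ Fi] := cov (exist _ f cf) (conj fx fc).
  by exists i => //; exact: ((svalP (hG i)).2 (exist _ f cf)).1 Fi.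
have : cover_compact (bounded_slice x c) by rewrite -compact_cover; exact: compact_bounded_slice.
move=> /(_ {classic I} setT G).
case=> [i _|//|D _ covD]; first by case: (svalP (hG i)).
exists [set` D]; split; first exact: (@finite_fset {classic I} D).
move=> phi [phix phic]; have [i Di Gi] := covD (sval phi) (And3 (svalP phi).1 phix phic).
by exists i => //; exact: ((svalP (hG i)).2 phi).2 Gi.
Qed.

End DualSlice.

Section LowerVietoris.
Variables (R : realType) (A : normedModType R[i]).

Lemma annihilator_meets_slice (V : MaxA A) (x : A) (e : R[i]) : 0 < e ->
  (forall v, sval V v -> e <= `|x - v|) -> annihilator V `&` dual_slice x e^-1 !=set0.
Proof.
move=> e0 x_far; have [_ [V0 VZD]] := svalP V.
have [f [lf fx fe fV]] := separating_functional e0 V0 VZD x_far.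
have cf : is_cont_linear_functional f.
  by split => //; apply: (bounded_linear_continuous lf _ fe); rewrite invr_gt0.
by exists (exist _ f cf).
Qed.

Lemma not_annihilator_eq1 (V : MaxA A) (phi : dual A) : ~ annihilator V phi ->
  exists2 x, sval V x & sval phi x = 1.
Proof.
move=> /existsNP [x /not_implyP [Vx /eqP phix]].
have [_ [V0 VZD]] := svalP V; have [lphi _] := svalP phi.
exists ((sval phi x)^-1 *: x); first by rewrite -[_ *: x]addr0; exact: VZD.
by rewrite complex_linearZ // mulVf.
Qed.

Lemma lower_vietoris_subbasis_annihilator_open :
  @lower_vietoris_subbasis R A `<=` generated_topology (@annihilator_subbasis R A).
Proof.
move=> _ [U [oU ->]]; apply: generated_topology_local => V0 [x [V0x Ux]].
have /nbhs_ballP [e e0 xeU] : nbhs x U by exact: open_nbhs_nbhs.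
exists [set V : MaxA A | annihilator V `&` dual_slice x e^-1 = set0]; split.
- apply: generated_topology_subbasis; exists (dual_slice x e^-1); split => //.
  by apply: compact_dual_slice; rewrite invr_gt0.
- apply/seteqP; split => // phi [/= /(_ x V0x) phix0 [phix _]].
  by move: phix0; rewrite phix => /eqP; rewrite oner_eq0.
- move=> V /= FV0; apply: contrapT => /set0P/negP/negbNE/eqP VU0.
  suff : annihilator V `&` dual_slice x e^-1 !=set0 by rewrite FV0 => -[].
  apply: annihilator_meets_slice => // v Vv.
  rewrite real_leNgt ?realE ?normr_ge0 ?(ltW e0) //; apply/negP => xv.
  have : (sval V `&` U) v by split => //; apply: xeU; rewrite -ball_normE.
  by rewrite VU0.
Qed.

Lemma annihilator_subbasis_lower_vietoris_open :
  @annihilator_subbasis R A `<=` generated_topology (@lower_vietoris_subbasis R A).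
Proof.
move=> _ [K' [cK' ->]]; apply: generated_topology_local => V0 /= FV0K'.
have [c c0 Kc] := compact_dual_equibounded cK'.
have /(_ _)/cid unit_at (p : {phi | K' phi}) : exists x, sval V0 x /\ sval (sval p) x = 1.
  move: p => [phi Kphi]; have [|x V0x phix] := @not_annihilator_eq1 V0 phi; last by exists x.
  by move=> FV0phi; have : (annihilator V0 `&` K') phi by []; rewrite FV0K'.
pose x p := sval (unit_at p).
pose O p := [set psi : dual A | sval psi @` [set x p] `<=` [set z | 2^-1 < `|z|]].
have oO p : dual_open (O p).
  apply: generated_topology_subbasis; exists [set x p], [set z | 2^-1 < `|z|].
  by split; [exact: compact_set1 | split => //; exact: open_norm_gt].
have covO : K' `<=` \bigcup_p O p.
  move=> phi Kphi; exists (exist _ phi Kphi) => //= _ [_ -> <-].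
  have /= phix := (svalP (unit_at (exist _ phi Kphi))).2.
  by rewrite /mkset /x phix normr1 invf_lt1 ?ltr1n.
have [D [fD covD]] := cK' _ O oO covO.
pose r := (2 * c)^-1; have r0 : 0 < r by rewrite invr_gt0 mulr_gt0.
exists (\bigcap_(p in D) [set V : MaxA A | sval V `&` ball (x p) r !=set0]); split.
- apply: generated_topology_bigcap => // p _; apply: generated_topology_subbasis.
  by exists (ball (x p) r); split => //; exact: ball_open.
- move=> p _ /=; exists (x p); split; [exact: (svalP (unit_at p)).1 | exact: ballxx].
- move=> V NV /=; apply/seteqP; split => // psi [FVpsi Kpsi].
  have [p Dp Opsi] := covD _ Kpsi; have [y [Vy xpy]] := NV p Dp.
  have far : 2^-1 < `|sval psi (x p)| by apply: Opsi; exists (x p).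
  have close : `|sval psi (x p)| < 2^-1.
    rewrite -[sval psi (x p)]subr0 -(FVpsi y Vy) -complex_linearB; last exact: (svalP psi).1.
    apply: le_lt_trans (Kc _ Kpsi _) _; rewrite -ball_normE /ball_ in xpy.
    have -> : (2^-1 : R[i]) = c * r by rewrite /r invfM mulrCA mulfV ?mulr1 // gt_eqF.
    by rewrite ltr_pM2l.
  by have := lt_trans far close; rewrite ltxx.
Qed.

End LowerVietoris.

Theorem lemma7p13 (R : realType) (A : normedModType R[i]) :
  generated_topology (@lower_vietoris_subbasis R A) =
  generated_topology (@annihilator_subbasis R A).
Proof.
apply/seteqP; split; apply: generated_topology_min.
- exact: lower_vietoris_subbasis_annihilator_open.
- exact: annihilator_subbasis_lower_vietoris_open.
Qed.
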